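(* Let $(\mathbf x,\mathbf p,\mu)$ be a deterministic TFM satisfying weak UIC and $2$-weak-SCP. Let $\mathbf b=(b_1,\dots,b_m)$ be a bid vector and $i$ a user with $x_i(\mathbf b)=1$, and let $\mathbf b'=(\mathbf b_{-i},b_i')$ be such that $x_i(\mathbf b')=1$. Then (1) $\mu(\mathbf b)=\mu(\mathbf b')$; and (2) for every user $j$ with $x_j(\mathbf b)=1$ and $b_j>p_j(\mathbf b)$, we have $x_j(\mathbf b')=1$ and $p_j(\mathbf b')=p_j(\mathbf b)$.
   Context: Setting (TFM). Each user $i$ has a true value $v_i\ge0$ and submits a single bid $b_i\ge0$; $\mathbf b=(b_1,\dots,b_m)$, $\mathbf b_{-i}$ the other bids. A TFM has an inclusion rule (run by the miner, choosing at most $B$ bids, $B$ finite or infinite) and confirmation, payment, miner-revenue rules (run by the blockchain on included bids); the mechanism treats users symmetrically. Composing the honest inclusion rule with the others gives deterministic $(\mathbf x,\mathbf p,\mu)$: $x_i(\mathbf b)\in\{0,1\}$ indicates confirmation, $p_i(\mathbf b)\le b_i$ the payment ($0$ if unconfirmed), $\mu(\mathbf b)$ the miner revenue (at most total payment). Strategic players (a user, the miner, or the miner with some users) may bid untruthfully after seeing all bids, inject fake bids (true value $0$), and (if the miner is involved) include any at most $B$ available bids. Weak ($1$-strict) utility: miner revenue (if the miner is in the player) plus $v-p$ for each confirmed transaction of the player (true value $v$, payment $p$), minus $(b-v)$ for each unconfirmed transaction of the player with bid $b>v$. Weak UIC: with an honest miner, each user's weak utility is maximized by truthful bidding without fake bids,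 whatever the other bids. $c$-weak-SCP: for every coalition of the miner with between $1$ and $c$ users, joint weak utility is maximized by truthful bidding and honest miner behavior, whatever the other bids. *)

From mathcomp Require Import all_boot all_order all_algebra.
From mathcomp Require Import reals.
Set Implicit Arguments. Unset Strict Implicit. Unset Printing Implicit Defensive.
Import Order.TTheory GRing.Theory Num.Theory.
Local Open Scope ring_scope.

(* Users are identified by their
   position in the bid vector.
   - cap  : block size B (None = infinite)
   - incl : honest inclusion rule, returns a bit mask over the bid vector
   - conf, pay, rev : confirmation / payment / miner-revenue rules, applied by
     the blockchain to the (ordered) list of included bids. *)
Record TFM (R : realType) := MkTFM {
  cap  : option nat;
  incl : seq R -> seq bool;
  conf : seq R -> seq bool;
  pay  : seq R -> seq R;
  rev  : seq R -> R }.

Definition capOK (B : option nat) (k : nat) : bool :=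
  if B is Some n then (k <= n)%N else true.

Definition nonneg_seq (R : realType) (s : seq R) : bool := all (fun v => 0 <= v) s.

(* Spread the per-included-bid results back to positions of the full vector;
   non-included positions get the default d. *)
Fixpoint spread (T : Type) (d : T) (m : seq bool) (s : seq T) : seq T :=
  match m with
  | [::] => [::]
  | true :: m' => head d s :: spread d m' (behead s)
  | false :: m' => d :: spread d m' s
  end.

Definition xo (R : realType) (M : TFM R) (c : seq R) (m : seq bool) : seq bool :=
  spread false m (conf M (mask m c)).
Definition po (R : realType) (M : TFM R) (c : seq R) (m : seq bool) : seq R :=
  spread 0 m (pay M (mask m c)).
Definition muo (R : realType) (M : TFM R) (c : seq R) (m : seq bool) : R :=
  rev M (mask m c).

Definition xh (R : realType) (M : TFM R) (b : seq R) : seq bool := xo M b (incl M b).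
Definition ph (R : realType) (M : TFM R) (b : seq R) : seq R := po M b (incl M b).
Definition muh (R : realType) (M : TFM R) (b : seq R) : R := muo M b (incl M b).

Definition wf_TFM (R : realType) (M : TFM R) : Prop :=
  (forall c : seq R, nonneg_seq c ->
     size (incl M c) = size c /\ capOK (cap M) (count id (incl M c)))
  /\ (forall blk : seq R, nonneg_seq blk -> capOK (cap M) (size blk) ->
       (forall k, (k < size blk)%N ->
          nth 0 (pay M blk) k <= nth 0 blk k /\
          (~~ nth false (conf M blk) k -> nth 0 (pay M blk) k = 0))
       /\ rev M blk <= \sum_(k < size blk) nth 0 (pay M blk) k).

(* Tagged bid vectors: each entry is (Some u, bid) for the transaction of the
   original user u, or (None, bid) for a fake bid (true value 0). *)
Definition honest_tags (R : realType) (b : seq R) : seq (option nat * R) :=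
  [seq (Some u, nth 0 b u) | u <- iota 0 (size b)].

(* t is a possible play when users in S are strategic (true bid vector b):
   real users keep their order, non-strategic users keep their bids,
   fake bids may be inserted anywhere, all bids are nonnegative. *)
Definition valid_dev (R : realType) (b : seq R) (S : seq nat)
    (t : seq (option nat * R)) : Prop :=
  pmap fst t = iota 0 (size b) /\
  all (fun e : option nat * R =>
         (0 <= e.2) &&
         (if e.1 is Some u then (u \in S) || (e.2 == nth 0 b u) else true)) t.

Definition owned (S : seq nat) (tag : option nat) : bool :=
  if tag is Some u then u \in S else true.

Definition tvalue (R : realType) (b : seq R) (tag : option nat) : R :=
  if tag is Some u then nth 0 b u else 0.

Definition contrib (R : realType) (x : bool) (p bid v : R) : R :=
  if x then v - p else if v < bid then v - bid else 0.

Definition util (R : realType) (M : TFM R) (miner : bool) (b : seq R)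
    (S : seq nat) (t : seq (option nat * R)) (m : seq bool) : R :=
  let c := map snd t in
  let tags := map fst t in
  (if miner then muo M c m else 0) +
  \sum_(k < size t)
     (if owned S (nth None tags k)
      then contrib (nth false (xo M c m) k) (nth 0 (po M c m) k) (nth 0 c k)
                   (tvalue b (nth None tags k))
      else 0).

Definition weakUIC (R : realType) (M : TFM R) : Prop :=
  forall b : seq R, nonneg_seq b -> forall i : nat, (i < size b)%N ->
  forall t, valid_dev b [:: i] t ->
    util M false b [:: i] t (incl M (map snd t))
    <= util M false b [:: i] (honest_tags b) (incl M b).

Definition weakSCP (R : realType) (M : TFM R) (c : nat) : Prop :=
  forall b : seq R, nonneg_seq b ->
  forall S : seq nat, uniq S -> (0 < size S <= c)%N ->
    all (fun u => (u < size b)%N) S ->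
  forall (t : seq (option nat * R)) (m : seq bool), valid_dev b S t ->
    size m = size t -> capOK (cap M) (count id m) ->
    util M true b S t m <= util M true b S (honest_tags b) (incl M b).

From mathcomp Require Import all_boot all_order all_algebra.
From mathcomp Require Import reals.
From mathcomp Require Import lra.
Set Implicit Arguments. Unset Strict Implicit. Unset Printing Implicit Defensive.
Import Order.TTheory GRing.Theory Num.Theory.
Local Open Scope ring_scope.

(* Playing [b'] when the truth is [b] is a deviation of user [i] alone, of the miner
   with [i], and of the miner with [i] and any [j].  Weak UIC gives
   p_i(b) <= p_i(b'), and 1-weak-SCP gives mu(b') - p_i(b') <= mu(b) - p_i(b);
   exchanging the roles of [b] and [b'] turns both into equalities, so
   mu(b) = mu(b').  With this equality, 2-weak-SCP for the coalition {miner, i, j}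
   says that [j]'s utility (whose bid is the same in [b] and [b']) cannot change.
   When that utility b_j - p_j(b) is positive, [j] must stay confirmed in [b']
   and pay the same. *)

Lemma big_ord_cond_mem_uniq (V : nmodType) n (S : seq nat) (F : nat -> V) :
  uniq S -> all (fun u => (u < n)%N) S ->
  \sum_(k < n) (if (k : nat) \in S then F k else 0) = \sum_(u <- S) F u.
Proof.
move=> uS /allP Sn; rewrite -big_mkcond -(big_mkord (mem S)) -big_filter.
apply: perm_big; apply: uniq_perm => [|//|u].
  by rewrite filter_uniq ?iota_uniq.
by rewrite mem_filter mem_iota subn0 andb_idr // => /Sn.
Qed.

Lemma contrib_truthful (R : realType) (x : bool) (p v : R) :
  contrib x p v v = if x then v - p else 0.
Proof. by rewrite /contrib ltxx; case: x. Qed.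

Section HonestPlay.
Variables (R : realType) (M : TFM R).

Lemma map_snd_honest_tags (c : seq R) : map snd (honest_tags c) = c.
Proof.
rewrite -[RHS](mkseq_nth 0) /honest_tags /mkseq -map_comp.
exact: eq_map.
Qed.

Lemma map_fst_honest_tags (c : seq R) :
  map fst (honest_tags c) = map Some (iota 0 (size c)).
Proof. by rewrite /honest_tags -map_comp. Qed.

Lemma size_honest_tags (c : seq R) : size (honest_tags c) = size c.
Proof. by rewrite size_map size_iota. Qed.

Lemma pmap_fst_honest_tags (c : seq R) : pmap fst (honest_tags c) = iota 0 (size c).
Proof. by rewrite /honest_tags; elim: (iota 0 (size c)) => //= u s ->. Qed.

Definition user_util (c v : seq R) (k : nat) : R :=
  contrib (nth false (xh M c) k) (nth 0 (ph M c) k) (nth 0 c k) (nth 0 v k).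

Lemma util_honest_tags (miner : bool) (v : seq R) (S : seq nat) (c : seq R) :
  uniq S -> all (fun u => (u < size c)%N) S ->
  util M miner v S (honest_tags c) (incl M c) =
  (if miner then muh M c else 0) + \sum_(u <- S) user_util c v u.
Proof.
move=> uS Sc; rewrite /util map_snd_honest_tags map_fst_honest_tags.
rewrite size_honest_tags -(big_ord_cond_mem_uniq _ uS Sc); congr (_ + _).
apply: eq_bigr => k _.
by rewrite (nth_map 0) ?size_iota // nth_iota.
Qed.

End HonestPlay.

Section UnilateralDeviation.
Variables (R : realType) (M : TFM R) (c c' : seq R) (i : nat).
Hypotheses (wfM : wf_TFM M) (c_ge0 : nonneg_seq c) (c'_ge0 : nonneg_seq c').
Hypotheses (size_c' : size c' = size c) (i_lt : (i < size c)%N).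
Hypothesis c'_eq : forall k, k != i -> nth 0 c' k = nth 0 c k.
Hypotheses (xi_c : nth false (xh M c) i) (xi_c' : nth false (xh M c') i).

Lemma valid_dev_honest_tags (S : seq nat) : i \in S -> valid_dev c S (honest_tags c').
Proof.
move=> iS; split; first by rewrite pmap_fst_honest_tags size_c'.
apply/allP => e /mapP [u]; rewrite mem_iota add0n => /andP[_ u_lt] -> /=.
rewrite (all_nthP 0 c'_ge0) //=.
have [->|u_i] := eqVneq u i; first by rewrite iS.
by rewrite c'_eq // eqxx orbT.
Qed.

Lemma user_util_unilateral (j : nat) :
  j != i -> user_util M c' c j = user_util M c' c' j.
Proof. by move=> j_i; rewrite /user_util c'_eq. Qed.

Lemma payment_le_deviation : weakUIC M -> nth 0 (ph M c) i <= nth 0 (ph M c') i.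
Proof.
move=> UIC; have := UIC c c_ge0 i i_lt _ (valid_dev_honest_tags (mem_head _ _)).
rewrite map_snd_honest_tags !util_honest_tags ?size_c' /= ?i_lt //.
by rewrite !big_seq1 /user_util !add0r /contrib xi_c xi_c' lerD2l lerN2.
Qed.

Lemma coalition_util_le (S : seq nat) : weakSCP M 2 ->
  uniq S -> (0 < size S <= 2)%N -> all (fun u => (u < size c)%N) S -> i \in S ->
  muh M c' + \sum_(u <- S) user_util M c' c u <= muh M c + \sum_(u <- S) user_util M c c u.
Proof.
move=> SCP uS S_le Sc iS.
have [size_incl cap_incl] := wfM.1 c' c'_ge0.
have := SCP c c_ge0 S uS S_le Sc _ (incl M c') (valid_dev_honest_tags iS).
rewrite size_incl size_honest_tags => /(_ erefl cap_incl).
by rewrite !util_honest_tags // size_c'.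
Qed.

Lemma revenue_net_le : weakSCP M 2 ->
  muh M c' - nth 0 (ph M c') i <= muh M c - nth 0 (ph M c) i.
Proof.
move=> SCP; have := coalition_util_le (S := [:: i]) SCP isT isT.
rewrite /= i_lt !big_seq1 /user_util /contrib xi_c xi_c' mem_head => /(_ isT isT).
lra.
Qed.

Lemma user_util_pair_le (j : nat) : weakSCP M 2 -> j != i -> (j < size c)%N ->
  muh M c' - nth 0 (ph M c') i + user_util M c' c' j <=
  muh M c - nth 0 (ph M c) i + user_util M c c j.
Proof.
move=> SCP j_i j_lt.
have uS : uniq [:: i; j] by rewrite /= inE eq_sym j_i.
have := coalition_util_le SCP uS isT; rewrite /= i_lt j_lt mem_head.
rewrite !big_cons !big_nil !addr0 (user_util_unilateral j_i) => /(_ isT isT).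
rewrite {1 3}/user_util /contrib xi_c xi_c'.
by set u' := user_util M c' c' j; set u := user_util M c c j; lra.
Qed.

End UnilateralDeviation.

Theorem mainTheorem13 (R : realType) (M : TFM R) :
  wf_TFM M -> weakUIC M -> weakSCP M 2 ->
  forall (b : seq R) (i : nat) (bi' : R),
    nonneg_seq b -> (i < size b)%N -> 0 <= bi' ->
    let b' := set_nth 0 b i bi' in
    nth false (xh M b) i -> nth false (xh M b') i ->
    muh M b = muh M b' /\
    (forall j : nat, (j < size b)%N ->
       nth false (xh M b) j -> nth 0 (ph M b) j < nth 0 b j ->
       nth false (xh M b') j /\ nth 0 (ph M b') j = nth 0 (ph M b) j).
Proof.
move=> wfM UIC SCP b i bi' b_ge0 i_lt bi'_ge0 b' xi xi'.
have size_b' : size b' = size b by rewrite size_set_nth; apply/maxn_idPr.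
have b'_eq k : k != i -> nth 0 b' k = nth 0 b k by rewrite nth_set_nth /= => /negbTE ->.
have b'_ge0 : nonneg_seq b'.
  apply/(all_nthP 0) => k; rewrite size_b' nth_set_nth /=.
  by case: eqP => // _; apply: (all_nthP 0 b_ge0).
have i_lt' : (i < size b')%N by rewrite size_b'.
have b_eq k : k != i -> nth 0 b k = nth 0 b' k by move/b'_eq.
have pi_eq : nth 0 (ph M b') i = nth 0 (ph M b) i.
  by apply/eqP; rewrite eq_le !payment_le_deviation.
have := revenue_net_le wfM b_ge0 b'_ge0 size_b' i_lt b'_eq xi xi' SCP.
have := revenue_net_le wfM b'_ge0 b_ge0 (esym size_b') i_lt' b_eq xi' xi SCP.
rewrite pi_eq => mu_le mu_ge; split; first lra.
move=> j j_lt xj pj_lt; have [->|j_i] := eqVneq j i; first by [].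
have := user_util_pair_le wfM b_ge0 b'_ge0 size_b' i_lt b'_eq xi xi' SCP j_i j_lt.
have := user_util_pair_le wfM b'_ge0 b_ge0 (esym size_b') i_lt' b_eq xi' xi SCP j_i.
rewrite size_b' => /(_ j_lt).
rewrite /user_util !contrib_truthful b'_eq // xj pi_eq.
by case: (nth false (xh M b') j) => ? ?; [split => //; lra | lra].
Qed.
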